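(* Let $N\geq3$. The trajectory $l_\infty$, i.e. the unique trajectory of system (S2) belonging to the unstable manifold of $Q_1=(0,0,0)$ and contained in the plane $\{x=0\}$ (with $z>0$), enters the region $\mathcal{R}=\{y>0,\ z>x\}$ and remains in it forever.
   Context: Let $m>1$, $\sigma>0$, $p>m$. System (S2) is $$\dot x=x(2-(m-1)y),\quad \dot y=-x-(N-2)y+z-my^2-\tfrac{p-m}{\sigma+2}xy,\quad \dot z=z(\sigma+2+(p-m)y).$$ For $N\ge3$, $Q_1=(0,0,0)$ is a saddle with two-dimensional unstable manifold tangent to the span of $(N,-1,0)$ and $(0,1,N+\sigma)$; the plane $\{x=0\}$ is invariant. *)

From Stdlib Require Import Reals.
From Coquelicot Require Import Coquelicot.
Open Scope R_scope.

Definition S2_solution (m N sigma p : R) (T : Rbar) (x y z : R -> R) : Prop :=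
  forall t : R, Rbar_lt t T ->
    derivable_pt_lim x t (x t * (2 - (m - 1) * y t)) /\
    derivable_pt_lim y t
      (- x t - (N - 2) * y t + z t - m * (y t)^2
       - (p - m) / (sigma + 2) * x t * y t) /\
    derivable_pt_lim z t (z t * (sigma + 2 + (p - m) * y t)).

Definition S2_maximal (m N sigma p : R) (T : Rbar) (x y z : R -> R) : Prop :=
  S2_solution m N sigma p T x y z /\
  forall (T' : Rbar) (x' y' z' : R -> R),
    S2_solution m N sigma p T' x' y' z' ->
    Rbar_le T T' ->
    (forall t : R, Rbar_lt t T -> x' t = x t /\ y' t = y t /\ z' t = z t) ->
    T' = T.

(* The trajectory lies in the unstable manifold of Q1 = (0,0,0):
   it tends to Q1 as t -> -oo. *)
Definition tends_to_Q1_backward (x y z : R -> R) : Prop :=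
  is_lim x m_infty 0 /\ is_lim y m_infty 0 /\ is_lim z m_infty 0.

(* Along the plane x = 0 the system reduces to y' = -(N-2) y + z - m y^2 with z > 0.
   Hence y' > 0 wherever y = 0, so once y is positive it stays positive; and y' > 0
   wherever -(N-2)/m < y <= 0, so if y never became positive it would be strictly
   increasing near -oo, contradicting y -> 0 there.  Maximality rules out the empty
   time interval, because the zero solution extends to all times. *)

From Stdlib Require Import Reals Lra Classical.
From Coquelicot Require Import Coquelicot.
Open Scope R_scope.

Lemma continuity_pt_eps f t : continuity_pt f t ->
  forall eps, 0 < eps ->
  exists del, 0 < del /\ forall u, Rabs (u - t) < del -> Rabs (f u - f t) < eps.
Proof.
  intros Hc eps Heps.
  destruct (proj1 (continuity_pt_locally f t) Hc (mkposreal eps Heps)) as [del Hdel].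
  exists del; split; [apply cond_pos | intros u Hu; exact (Hdel u Hu)].
Qed.

Lemma first_zero f a b : a < b ->
  (forall c, a <= c <= b -> continuity_pt f c) -> 0 < f a -> f b <= 0 ->
  exists c, a < c <= b /\ f c = 0 /\ forall u, a <= u < c -> 0 < f u.
Proof.
  intros Hab Hcont Ha Hb.
  (* [c] is the infimum of the points of [a, b] where [f <= 0]. *)
  set (LB := fun v => forall u, a <= u <= b -> f u <= 0 -> v <= u).
  assert (HLa : LB a) by (intros u Hu _; lra).
  assert (HLbound : bound LB) by (exists b; intros v Hv; apply Hv; lra).
  destruct (completeness LB HLbound (ex_intro _ a HLa)) as [c [Hub Hlub]].
  assert (Hc_lb : LB c).
  { intros u Hu Hfu. apply Hlub. intros v Hv. exact (Hv u Hu Hfu). }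
  assert (Hac : a <= c) by (apply Hub; exact HLa).
  assert (Hcb : c <= b) by (apply Hc_lb; lra).
  assert (Hbefore : forall u, a <= u < c -> 0 < f u).
  { intros u Hu. destruct (Rlt_or_le 0 (f u)) as [|Hfu]; [easy|].
    pose proof (Hc_lb u ltac:(lra) Hfu). lra. }
  assert (Hfc_le : f c <= 0).
  { destruct (Rle_or_lt (f c) 0) as [|Hpos]; [easy|].
    destruct (continuity_pt_eps f c (Hcont c ltac:(lra)) _ Hpos) as [del [Hdel Hnear]].
    assert (Hnext : LB (c + del / 2)).
    { intros u Hu Hfu. pose proof (Hc_lb u Hu Hfu).
      destruct (Rlt_or_le u (c + del)); [|lra].
      pose proof (Hnear u ltac:(rewrite Rabs_right; lra)) as Hd.
      apply Rabs_def2 in Hd. lra. }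
    pose proof (Hub _ Hnext). lra. }
  assert (Hac' : a < c).
  { destruct Hac as [|<-]; [easy|lra]. }
  assert (Hfc : f c = 0).
  { destruct Hfc_le as [Hneg|]; [|easy].
    destruct (continuity_pt_eps f c (Hcont c ltac:(lra)) (- f c) ltac:(lra))
      as [del [Hdel Hnear]].
    set (u := Rmax a (c - del / 2)).
    assert (Hu : a <= u < c /\ c - del < u)
      by (unfold u, Rmax; destruct Rle_dec; lra).
    pose proof (Hbefore u ltac:(lra)).
    pose proof (Hnear u ltac:(rewrite Rabs_left; lra)) as Hd.
    apply Rabs_def2 in Hd. lra. }
  exists c. auto.
Qed.

Lemma derivable_pt_lim_pos_lt_left f c l : derivable_pt_lim f c l -> 0 < l ->
  exists del, 0 < del /\ forall u, c - del < u < c -> f u < f c.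
Proof.
  intros Hd Hl.
  destruct (Hd l Hl) as [del Hdel].
  exists del. split; [apply cond_pos|].
  intros u Hu.
  pose proof (Hdel (u - c) ltac:(lra) ltac:(rewrite Rabs_left; lra)) as Hq.
  replace (c + (u - c)) with u in Hq by ring.
  apply Rabs_def2 in Hq.
  assert (Hneg : (f u - f c) / (u - c) > 0) by lra.
  assert (Hinv : / (u - c) < 0) by (apply Rinv_lt_0_compat; lra).
  unfold Rdiv in Hneg. nra.
Qed.

Lemma positivity_persists f df a b : a <= b ->
  (forall c, a <= c <= b -> derivable_pt_lim f c (df c)) ->
  (forall c, a <= c <= b -> f c = 0 -> 0 < df c) ->
  0 < f a -> 0 < f b.
Proof.
  intros Hab Hd Hcross Ha.
  destruct (Rlt_or_le 0 (f b)) as [|Hb]; [easy|exfalso].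
  destruct Hab as [Hab|<-]; [|lra].
  assert (Hcont : forall c, a <= c <= b -> continuity_pt f c).
  { intros c Hc. apply derivable_continuous_pt. exists (df c). apply Hd, Hc. }
  destruct (first_zero f a b Hab Hcont Ha Hb) as [c [Hc [Hfc Hbefore]]].
  destruct (derivable_pt_lim_pos_lt_left f c (df c) (Hd c ltac:(lra))
              (Hcross c ltac:(lra) Hfc)) as [del [Hdel Hleft]].
  set (u := Rmax a (c - del / 2)).
  assert (Hu : a <= u < c /\ c - del < u) by (unfold u, Rmax; destruct Rle_dec; lra).
  pose proof (Hbefore u ltac:(lra)).
  pose proof (Hleft u ltac:(lra)).
  lra.
Qed.

Lemma exists_pos_of_lim_m_infty f df b del : 0 < del ->
  is_lim f m_infty 0 ->
  (forall t, t < b -> derivable_pt_lim f t (df t)) ->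
  (forall t, t < b -> - del < f t <= 0 -> 0 < df t) ->
  exists t, t < b /\ 0 < f t.
Proof.
  intros Hdel Hlim Hd Hincr.
  apply NNPP. intros Hnone.
  assert (Hnonpos : forall t, t < b -> f t <= 0).
  { intros t Ht. destruct (Rlt_or_le 0 (f t)); [|easy].
    exfalso. apply Hnone. exists t. auto. }
  destruct (proj2 (is_lim_spec f m_infty 0) Hlim (mkposreal del Hdel)) as [A HA].
  simpl in HA.
  set (A' := Rmin A b).
  assert (HA' : forall t, t < A' -> t < b /\ - del < f t).
  { intros t Ht. assert (t < A /\ t < b) by (unfold A', Rmin in Ht; destruct Rle_dec; lra).
    pose proof (HA t ltac:(lra)) as Hs. rewrite Rminus_0_r in Hs.
    apply Rabs_def2 in Hs. split; lra. }
  assert (Hmono : forall s r, s < r -> r < A' -> f s < f r).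
  { intros s r Hsr Hr.
    apply (incr_function f m_infty A' df); simpl; auto.
    - intros t _ Ht. apply is_derive_Reals, Hd, HA'; exact Ht.
    - intros t _ Ht. destruct (HA' t Ht). apply Hincr; auto. }
  set (r := A' - 1).
  assert (Hle : Rbar_le 0 (f (r - 1))).
  { apply (is_lim_le_loc f (fun _ => f (r - 1)) m_infty); [|exact Hlim|apply is_lim_const].
    exists (r - 1). intros s Hs. left. apply Hmono; unfold r in *; lra. }
  simpl in Hle.
  pose proof (Hmono (r - 1) r ltac:(lra) ltac:(unfold r; lra)).
  pose proof (Hnonpos r ltac:(destruct (HA' r ltac:(unfold r; lra)); auto)).
  lra.
Qed.

Lemma S2_solution_zero m N sigma p T :
  S2_solution m N sigma p T (fun _ => 0) (fun _ => 0) (fun _ => 0).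
Proof.
  intros t _.
  repeat split;
    match goal with |- derivable_pt_lim _ _ ?l =>
      replace l with 0 by ring; apply derivable_pt_lim_const end.
Qed.

Lemma S2_maximal_domain_nonempty m N sigma p T x y z :
  S2_maximal m N sigma p T x y z -> exists t : R, Rbar_lt t T.
Proof.
  intros [_ Hmax].
  destruct T as [b| |].
  - exists (b - 1). simpl. lra.
  - exists 0. exact I.
  - exfalso.
    assert (Heq : p_infty = m_infty).
    { apply (Hmax p_infty _ _ _ (S2_solution_zero m N sigma p p_infty)); [exact I|].
      intros t Ht. destruct Ht. }
    discriminate.
Qed.

Lemma S2_y_derivative_on_plane m N sigma p T x y z :
  S2_solution m N sigma p T x y z -> (forall t : R, Rbar_lt t T -> x t = 0) ->
  forall t : R, Rbar_lt t T ->
    derivable_pt_lim y t (- (N - 2) * y t + z t - m * y t ^ 2).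
Proof.
  intros Hsol Hx t Ht.
  destruct (Hsol t Ht) as [_ [Hyt _]].
  rewrite (Hx t Ht) in Hyt.
  replace (- (N - 2) * y t + z t - m * y t ^ 2) with
    (- 0 - (N - 2) * y t + z t - m * y t ^ 2 - (p - m) / (sigma + 2) * 0 * y t)
    by ring.
  exact Hyt.
Qed.

Lemma plane_y_field_pos m N y z : 0 < m -> 0 < z -> - ((N - 2) / m) < y <= 0 ->
  0 < - (N - 2) * y + z - m * y ^ 2.
Proof.
  intros Hm Hz [Hlow Hy].
  assert (Hmy : - (N - 2) < m * y).
  { apply Rmult_lt_compat_l with (r := m) in Hlow; [|exact Hm].
    field_simplify in Hlow; lra. }
  nra.
Qed.

Theorem lemma3p2 (m sigma p : R) (N : nat) (T : Rbar) (x y z : R -> R) :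
  1 < m -> 0 < sigma -> m < p -> (3 <= N)%nat ->
  S2_maximal m (INR N) sigma p T x y z ->
  tends_to_Q1_backward x y z ->
  (forall t : R, Rbar_lt t T -> x t = 0) ->
  (forall t : R, Rbar_lt t T -> 0 < z t) ->
  exists t0 : R, Rbar_lt t0 T /\
    forall t : R, t0 <= t -> Rbar_lt t T -> 0 < y t /\ x t < z t.
Proof.
  intros Hm _ _ HN3 Hmaximal [_ [Hylim _]] Hx Hz.
  assert (HN : 3 <= INR N) by (apply le_INR in HN3; simpl in HN3; lra).
  set (dy := fun t => - (INR N - 2) * y t + z t - m * y t ^ 2).
  pose proof (S2_y_derivative_on_plane _ _ _ _ _ _ _ _ (proj1 Hmaximal) Hx) as Hdy.
  set (del := (INR N - 2) / m).
  assert (Hdel : 0 < del) by (apply Rdiv_lt_0_compat; lra).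
  assert (Hdy_pos : forall t : R, Rbar_lt t T -> - del < y t <= 0 -> 0 < dy t)
    by (intros t Ht; apply plane_y_field_pos; [lra | apply Hz, Ht]).
  assert (Hbefore : forall c t : R, c <= t -> Rbar_lt t T -> Rbar_lt c T)
    by (intros c t Hct; apply Rbar_le_lt_trans; exact Hct).
  destruct (S2_maximal_domain_nonempty _ _ _ _ _ _ _ _ Hmaximal) as [b Hb].
  assert (Hbelow_b : forall t : R, t < b -> Rbar_lt t T)
    by (intros t Htb; apply (Hbefore t b); [lra | exact Hb]).
  destruct (exists_pos_of_lim_m_infty y dy b del Hdel Hylim
              (fun t Ht => Hdy t (Hbelow_b t Ht)) (fun t Ht => Hdy_pos t (Hbelow_b t Ht)))
    as [t0 [Ht0b Hyt0]].
  exists t0. split; [exact (Hbelow_b t0 Ht0b)|].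
  intros t Ht Dt. split.
  - assert (Hbelow_t : forall c, t0 <= c <= t -> Rbar_lt c T)
      by (intros c Hc; apply (Hbefore c t); [lra | exact Dt]).
    apply (positivity_persists y dy t0 t Ht); [| |exact Hyt0].
    + intros c Hc. exact (Hdy c (Hbelow_t c Hc)).
    + intros c Hc Hyc. apply (Hdy_pos c (Hbelow_t c Hc)). lra.
  - rewrite (Hx t Dt). apply Hz, Dt.
Qed.
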